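(* Let $(L,\exists)$ be a quantum monadic algebra and $a\in L$ with $\exists a=a$. Then the interval $[0,a]=\{x\in L: x\le a\}$, with the lattice operations of $L$, bounds $0,a$, orthocomplement $x^\#=a\wedge x^\perp$, and the restriction of $\exists$, is a quantum monadic algebra. Moreover, with $C(a)=\{x\in L: a\text{ commutes with }x\}$ (a subalgebra of $(L,\exists)$), the map $x\mapsto(x\wedge a,\,x\wedge a^\perp)$ is an isomorphism of quantum monadic algebras from $(C(a),\exists)$ onto the product $([0,a],\exists)\times([0,a^\perp],\exists)$, where $[0,a^\perp]$ carries orthocomplement $x\mapsto a^\perp\wedge x^\perp$.
   Context: An orthomodular lattice (OML) is a bounded lattice with a unary operation $\perp$ that is order-inverting, of period two, satisfies $x\wedge x^\perp=0$, $x\vee x^\perp=1$, and $x\le y\Rightarrow x\vee(x^\perp\wedge y)=y$. A quantum monadic algebra $(L,\exists)$ is an OML with a unary operation $\exists$ satisfying (Q1) $\exists 0=0$; (Q2) $p\le\exists p$; (Q3) $\exists(p\vee q)=\exists p\vee\exists q$; (Q4) $\exists\exists p=\exists p$; (Q5) $\exists(\exists p)^\perp=(\exists p)^\perp$. Elements $x,y$ of an OML commute if $x=(x\wedge y)\vee(x\wedge y^\perp)$. *)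

(* An algebra signature (join, meet, orthocomplement, 0, 1, quantifier) on a
   carrier type, and the axioms of orthomodular lattices / quantum monadic
   algebras, relativized to a carrier predicate S (so that sub-structures such
   as intervals [0,a] of an ambient algebra can be expressed directly). *)

Record qops (T : Type) := QOps {
  jn : T -> T -> T;
  mt : T -> T -> T;
  cp : T -> T;
  zr : T;
  on : T;
  ex : T -> T
}.
Arguments QOps {T}.
Arguments jn {T}. Arguments mt {T}. Arguments cp {T}.
Arguments zr {T}. Arguments on {T}. Arguments ex {T}.

Definition qle {T} (o : qops T) (x y : T) : Prop := mt o x y = x.

Record OML_on {T} (S : T -> Prop) (o : qops T) : Prop := {
  cl_jn : forall x y, S x -> S y -> S (jn o x y);
  cl_mt : forall x y, S x -> S y -> S (mt o x y);
  cl_cp : forall x, S x -> S (cp o x);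
  cl_zr : S (zr o);
  cl_on : S (on o);
  jn_comm : forall x y, S x -> S y -> jn o x y = jn o y x;
  mt_comm : forall x y, S x -> S y -> mt o x y = mt o y x;
  jn_assoc : forall x y z, S x -> S y -> S z -> jn o x (jn o y z) = jn o (jn o x y) z;
  mt_assoc : forall x y z, S x -> S y -> S z -> mt o x (mt o y z) = mt o (mt o x y) z;
  absorb_jm : forall x y, S x -> S y -> jn o x (mt o x y) = x;
  absorb_mj : forall x y, S x -> S y -> mt o x (jn o x y) = x;
  zr_le : forall x, S x -> qle o (zr o) x;
  le_on : forall x, S x -> qle o x (on o);
  cp_anti : forall x y, S x -> S y -> qle o x y -> qle o (cp o y) (cp o x);
  cp_invol : forall x, S x -> cp o (cp o x) = x;
  cp_mt : forall x, S x -> mt o x (cp o x) = zr o;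
  cp_jn : forall x, S x -> jn o x (cp o x) = on o;
  orthomod : forall x y, S x -> S y -> qle o x y -> jn o x (mt o (cp o x) y) = y
}.

Record QMA_on {T} (S : T -> Prop) (o : qops T) : Prop := {
  qma_oml : OML_on S o;
  cl_ex : forall x, S x -> S (ex o x);
  Q1 : ex o (zr o) = zr o;
  Q2 : forall p, S p -> qle o p (ex o p);
  Q3 : forall p q, S p -> S q -> ex o (jn o p q) = jn o (ex o p) (ex o q);
  Q4 : forall p, S p -> ex o (ex o p) = ex o p;
  Q5 : forall p, S p -> ex o (cp o (ex o p)) = cp o (ex o p)
}.

Definition QMA {T} (o : qops T) : Prop := QMA_on (fun _ => True) o.

Definition commutes {T} (o : qops T) (x y : T) : Prop :=
  x = jn o (mt o x y) (mt o x (cp o y)).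

Definition subalgebra {T} (o : qops T) (S : T -> Prop) : Prop :=
  (forall x y, S x -> S y -> S (jn o x y)) /\
  (forall x y, S x -> S y -> S (mt o x y)) /\
  (forall x, S x -> S (cp o x)) /\ S (zr o) /\ S (on o) /\
  (forall x, S x -> S (ex o x)).

Definition interval {T} (o : qops T) (a : T) : T -> Prop := fun x => qle o x a.
Definition interval_ops {T} (o : qops T) (a : T) : qops T :=
  QOps (jn o) (mt o) (fun x => mt o a (cp o x)) (zr o) a (ex o).

Definition prod_ops {A B} (o1 : qops A) (o2 : qops B) : qops (A * B) :=
  QOps (fun p q => (jn o1 (fst p) (fst q), jn o2 (snd p) (snd q)))
       (fun p q => (mt o1 (fst p) (fst q), mt o2 (snd p) (snd q)))
       (fun p => (cp o1 (fst p), cp o2 (snd p)))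
       (zr o1, zr o2) (on o1, on o2)
       (fun p => (ex o1 (fst p), ex o2 (snd p))).
Definition prod_set {A B} (S1 : A -> Prop) (S2 : B -> Prop) : A * B -> Prop :=
  fun p => S1 (fst p) /\ S2 (snd p).

Definition iso_on {A B} (SA : A -> Prop) (oA : qops A)
    (SB : B -> Prop) (oB : qops B) (f : A -> B) : Prop :=
  (forall x, SA x -> SB (f x)) /\
  (forall x y, SA x -> SA y -> f x = f y -> x = y) /\
  (forall z, SB z -> exists x, SA x /\ f x = z) /\
  (forall x y, SA x -> SA y -> f (jn oA x y) = jn oB (f x) (f y)) /\
  (forall x y, SA x -> SA y -> f (mt oA x y) = mt oB (f x) (f y)) /\
  (forall x, SA x -> f (cp oA x) = cp oB (f x)) /\
  f (zr oA) = zr oB /\ f (on oA) = on oB /\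
  (forall x, SA x -> f (ex oA x) = ex oB (f x)).

From Stdlib Require Import Setoid.

(* An element x commutes with a iff it splits as x = p ⊔ q with p ≤ a and
   q ≤ a^⊥; both pieces are then recovered as x ⊓ a and x ⊓ a^⊥, by
   orthomodularity.  On such elements the map x ↦ x ⊓ a preserves joins and
   meets, and sends x^⊥ to the relative complement a ⊓ (x ⊓ a)^⊥.  When a is
   closed (∃a = a), so is a^⊥ by (Q5), hence ∃ maps [0,a] and [0,a^⊥] into
   themselves and ∃(p ⊔ q) = ∃p ⊔ ∃q is again split; this makes x ↦ x ⊓ a
   commute with ∃ as well.  Pairing the two projections gives the
   isomorphism, whose inverse is (p, q) ↦ p ⊔ q. *)

Definition OML {T} (o : qops T) : Prop := OML_on (fun _ => True) o.

Definition decomposes {T} (o : qops T) (c x : T) : Prop :=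
  exists p q, qle o p c /\ qle o q (cp o c) /\ x = jn o p q.

Section OrthomodularLattice.

Context {T : Type} {o : qops T}.
Hypothesis oml : OML o.

Local Notation "x ⊔ y" := (jn o x y) (at level 50, left associativity).
Local Notation "x ⊓ y" := (mt o x y) (at level 40, left associativity).
Local Notation "x ^⊥" := (cp o x) (at level 2, left associativity, format "x ^⊥").
Local Notation "x ≤ y" := (qle o x y) (at level 70, no associativity).

Lemma joinC x y : x ⊔ y = y ⊔ x.
Proof. exact (jn_comm _ _ oml x y I I). Qed.
Lemma meetC x y : x ⊓ y = y ⊓ x.
Proof. exact (mt_comm _ _ oml x y I I). Qed.
Lemma joinA x y z : x ⊔ (y ⊔ z) = x ⊔ y ⊔ z.
Proof. exact (jn_assoc _ _ oml x y z I I I). Qed.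
Lemma meetA x y z : x ⊓ (y ⊓ z) = x ⊓ y ⊓ z.
Proof. exact (mt_assoc _ _ oml x y z I I I). Qed.
Lemma joinKI x y : x ⊔ x ⊓ y = x.
Proof. exact (absorb_jm _ _ oml x y I I). Qed.
Lemma meetKU x y : x ⊓ (x ⊔ y) = x.
Proof. exact (absorb_mj _ _ oml x y I I). Qed.
Lemma complK x : x^⊥^⊥ = x.
Proof. exact (cp_invol _ _ oml x I). Qed.
Lemma le_compl {x y} : x ≤ y -> y^⊥ ≤ x^⊥.
Proof. exact (cp_anti _ _ oml x y I I). Qed.
Lemma meet_compl x : x ⊓ x^⊥ = zr o.
Proof. exact (cp_mt _ _ oml x I). Qed.
Lemma join_compl x : x ⊔ x^⊥ = on o.
Proof. exact (cp_jn _ _ oml x I). Qed.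
Lemma orthomodular {x y} : x ≤ y -> x ⊔ x^⊥ ⊓ y = y.
Proof. exact (orthomod _ _ oml x y I I). Qed.
Lemma le0x x : zr o ≤ x.
Proof. exact (zr_le _ _ oml x I). Qed.
Lemma lex1 x : x ≤ on o.
Proof. exact (le_on _ _ oml x I). Qed.

Lemma meetxx x : x ⊓ x = x.
Proof. rewrite <- (joinKI x x) at 2. apply meetKU. Qed.

Lemma lexx x : x ≤ x.
Proof. apply meetxx. Qed.

Lemma le_trans x y z : x ≤ y -> y ≤ z -> x ≤ z.
Proof. unfold qle; intros xy yz. rewrite <- xy, <- meetA, yz. reflexivity. Qed.

Lemma le_anti x y : x ≤ y -> y ≤ x -> x = y.
Proof. unfold qle; intros xy yx. rewrite <- xy, meetC. exact yx. Qed.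

Lemma join_r {x y} : x ≤ y -> x ⊔ y = y.
Proof. unfold qle; intros xy. rewrite <- xy, joinC, meetC. apply joinKI. Qed.

Lemma le_of_join_r x y : x ⊔ y = y -> x ≤ y.
Proof. unfold qle; intros xy. rewrite <- xy. apply meetKU. Qed.

Lemma leUl x y : x ≤ x ⊔ y.
Proof. apply meetKU. Qed.
Lemma leUr x y : y ≤ x ⊔ y.
Proof. rewrite joinC. apply meetKU. Qed.
Lemma leIl x y : x ⊓ y ≤ x.
Proof. unfold qle. rewrite meetC, meetA, meetxx. reflexivity. Qed.
Lemma leIr x y : x ⊓ y ≤ y.
Proof. unfold qle. rewrite <- meetA, meetxx. reflexivity. Qed.

Lemma meet_glb x y z : z ≤ x -> z ≤ y -> z ≤ x ⊓ y.
Proof. unfold qle; intros zx zy. rewrite meetA, zx, zy. reflexivity. Qed.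

Lemma join_lub x y z : x ≤ z -> y ≤ z -> x ⊔ y ≤ z.
Proof.
  intros xz yz. apply le_of_join_r. rewrite <- joinA, (join_r yz). exact (join_r xz).
Qed.

Lemma leI2l x y z : x ≤ y -> x ⊓ z ≤ y ⊓ z.
Proof.
  intros xy. apply meet_glb; [apply (le_trans _ _ _ (leIl x z) xy) | apply leIr].
Qed.

Lemma leU2r x y z : x ≤ y -> z ⊔ x ≤ z ⊔ y.
Proof.
  intros xy. apply join_lub; [apply leUl | apply (le_trans _ _ _ xy), leUr].
Qed.

Lemma joinACA x y z t : x ⊔ y ⊔ (z ⊔ t) = x ⊔ z ⊔ (y ⊔ t).
Proof. rewrite <- !joinA. f_equal. rewrite !joinA. f_equal. apply joinC. Qed.

Lemma meetIIr x y z : x ⊓ y ⊓ z = x ⊓ z ⊓ (y ⊓ z).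
Proof.
  rewrite <- (meetA x z), (meetC y z), (meetA z z), meetxx, (meetC z y), meetA.
  reflexivity.
Qed.

Lemma complU x y : (x ⊔ y)^⊥ = x^⊥ ⊓ y^⊥.
Proof.
  apply le_anti.
  - apply meet_glb; apply le_compl; [apply leUl | apply leUr].
  - rewrite <- (complK (x^⊥ ⊓ y^⊥)). apply le_compl, join_lub.
    + rewrite <- (complK x) at 1. apply le_compl, leIl.
    + rewrite <- (complK y) at 1. apply le_compl, leIr.
Qed.

Lemma complI x y : (x ⊓ y)^⊥ = x^⊥ ⊔ y^⊥.
Proof. rewrite <- (complK (x^⊥ ⊔ y^⊥)), complU, !complK. reflexivity. Qed.

Lemma le_compl_sym {x y} : x ≤ y^⊥ -> y ≤ x^⊥.
Proof. intros xy. rewrite <- (complK y). exact (le_compl xy). Qed.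

Lemma orthomodular_dual {p c} : p ≤ c -> (p ⊔ c^⊥) ⊓ c = p.
Proof.
  intros pc. pose proof (orthomodular (le_compl pc)) as om. rewrite complK in om.
  rewrite <- (complK p) at 2. rewrite <- om, complU, complI, !complK.
  rewrite meetC, joinC. reflexivity.
Qed.

Lemma meet_orth_join {p q c} : p ≤ c -> q ≤ c^⊥ -> (p ⊔ q) ⊓ c = p.
Proof.
  intros pc qc. apply le_anti.
  - rewrite <- (orthomodular_dual pc) at 2. apply leI2l, leU2r, qc.
  - apply meet_glb; [apply leUl | exact pc].
Qed.

Lemma meet_orth_join_compl {p q c} : p ≤ c -> q ≤ c^⊥ -> (p ⊔ q) ⊓ c^⊥ = q.
Proof.
  intros pc qc. rewrite joinC. apply meet_orth_join; [exact qc | rewrite complK; exact pc].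
Qed.

Lemma interval_OML b : OML_on (interval o b) (interval_ops o b).
Proof.
  unfold interval. constructor; simpl.
  - intros x y xb yb. apply join_lub; assumption.
  - intros x y xb _. apply (le_trans _ x); [apply leIl | exact xb].
  - intros x _. apply leIl.
  - apply le0x.
  - apply lexx.
  - intros x y _ _. apply joinC.
  - intros x y _ _. apply meetC.
  - intros x y z _ _ _. apply joinA.
  - intros x y z _ _ _. apply meetA.
  - intros x y _ _. apply joinKI.
  - intros x y _ _. apply meetKU.
  - intros x _. apply le0x.
  - intros x xb. exact xb.
  - intros x y _ _ xy. rewrite !(meetC b). apply leI2l, le_compl, xy.
  - intros x xb. rewrite complI, complK, meetC, joinC. apply orthomodular_dual, xb.
  - intros x _. rewrite meetA, (meetC x b), <- meetA, meet_compl, meetC. apply le0x.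
  - intros x xb. rewrite meetC. apply orthomodular, xb.
  - intros x y _ yb xy. unfold qle in yb.
    rewrite (meetC b), <- meetA, (meetC b y), yb. apply orthomodular, xy.
Qed.

Lemma decomposes_of_commutes c x : commutes o x c -> decomposes o c x.
Proof.
  intros xc. exists (x ⊓ c), (x ⊓ c^⊥).
  split; [apply leIr | split; [apply leIr | exact xc]].
Qed.

Lemma commutes_of_decomposes c x : decomposes o c x -> commutes o c x.
Proof.
  intros (p & q & pc & qc & ->). unfold commutes.
  rewrite (meetC c (p ⊔ q)), (meet_orth_join pc qc), complU.
  rewrite (meetC (p^⊥)), meetA, (le_compl_sym qc), meetC.
  symmetry. apply orthomodular, pc.
Qed.

Lemma commutes_sym {x y} : commutes o x y -> commutes o y x.
Proof. intros xy. apply commutes_of_decomposes, decomposes_of_commutes, xy. Qed.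

Lemma commutes_decomposes c x : commutes o c x <-> decomposes o c x.
Proof.
  split; [intros cx; apply decomposes_of_commutes, commutes_sym, cx
         | apply commutes_of_decomposes].
Qed.

Lemma commutes_compl c x : commutes o c x -> commutes o c x^⊥.
Proof. unfold commutes. intros cx. rewrite complK, joinC. exact cx. Qed.

Lemma decomposes_compl_swap {c x} : decomposes o c x -> decomposes o c^⊥ x.
Proof.
  intros (p & q & pc & qc & ->). exists q, p.
  rewrite complK. split; [exact qc | split; [exact pc | apply joinC]].
Qed.

Lemma decomposes_0 c : decomposes o c (zr o).
Proof.
  exists (zr o), (zr o).
  split; [apply le0x | split; [apply le0x | symmetry; apply join_r, le0x]].
Qed.

Lemma decomposes_1 c : decomposes o c (on o).
Proof.
  exists c, c^⊥.
  split; [apply lexx | split; [apply lexx | symmetry; apply join_compl]].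
Qed.

Lemma decomposes_join c x y :
  decomposes o c x -> decomposes o c y -> decomposes o c (x ⊔ y).
Proof.
  intros (p & q & pc & qc & ->) (p' & q' & pc' & qc' & ->).
  exists (p ⊔ p'), (q ⊔ q'). split; [apply join_lub; assumption | split].
  - apply join_lub; assumption.
  - apply joinACA.
Qed.

Lemma decomposes_compl c x : decomposes o c x -> decomposes o c x^⊥.
Proof. rewrite <- !commutes_decomposes. apply commutes_compl. Qed.

Lemma decomposes_meet c x y :
  decomposes o c x -> decomposes o c y -> decomposes o c (x ⊓ y).
Proof.
  intros cx cy. rewrite <- (complK (x ⊓ y)), complI.
  apply decomposes_compl, decomposes_join; apply decomposes_compl; assumption.
Qed.

Lemma meet_join_decomposes c x y : decomposes o c x -> decomposes o c y ->
  (x ⊔ y) ⊓ c = x ⊓ c ⊔ y ⊓ c.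
Proof.
  intros (p & q & pc & qc & ->) (p' & q' & pc' & qc' & ->).
  rewrite joinACA, !meet_orth_join by (try apply join_lub; assumption).
  reflexivity.
Qed.

Lemma meet_compl_decomposes {c x} : decomposes o c x -> x^⊥ ⊓ c = c ⊓ (x ⊓ c)^⊥.
Proof.
  intros (p & q & pc & qc & ->). rewrite (meet_orth_join pc qc), complU.
  rewrite <- meetA, (meetC (q^⊥) c), (le_compl_sym qc). apply meetC.
Qed.

End OrthomodularLattice.

Section QuantumMonadicAlgebra.

Context {T : Type} {o : qops T}.
Hypothesis qma : QMA o.
Let oml : OML o := qma_oml _ _ qma.

Local Notation "x ⊔ y" := (jn o x y) (at level 50, left associativity).
Local Notation "x ⊓ y" := (mt o x y) (at level 40, left associativity).
Local Notation "x ^⊥" := (cp o x) (at level 2, left associativity, format "x ^⊥").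
Local Notation "x ≤ y" := (qle o x y) (at level 70, no associativity).

Lemma ex_join p q : ex o (p ⊔ q) = ex o p ⊔ ex o q.
Proof. exact (Q3 _ _ qma p q I I). Qed.

Lemma ex_mono {x y} : x ≤ y -> ex o x ≤ ex o y.
Proof.
  intros xy. apply (le_of_join_r oml). rewrite <- ex_join, (join_r oml xy). reflexivity.
Qed.

Lemma ex_compl_fixed {c} : ex o c = c -> ex o c^⊥ = c^⊥.
Proof. intros E. pose proof (Q5 _ _ qma c I) as K. rewrite E in K. exact K. Qed.

Lemma ex_meet_fixed {x y} : ex o x = x -> ex o y = y -> ex o (x ⊓ y) = x ⊓ y.
Proof.
  intros Ex Ey. rewrite <- (complK oml (x ⊓ y)), (complI oml).
  apply ex_compl_fixed. rewrite ex_join, !ex_compl_fixed by assumption. reflexivity.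
Qed.

Lemma ex_le_fixed {x c} : ex o c = c -> x ≤ c -> ex o x ≤ c.
Proof. intros E xc. rewrite <- E. exact (ex_mono xc). Qed.

Lemma decomposes_ex {c x} : ex o c = c -> decomposes o c x -> decomposes o c (ex o x).
Proof.
  intros E (p & q & pc & qc & ->). exists (ex o p), (ex o q). rewrite ex_join.
  split; [exact (ex_le_fixed E pc) |].
  split; [exact (ex_le_fixed (ex_compl_fixed E) qc) | reflexivity].
Qed.

Lemma ex_meet_decomposes {c x} : ex o c = c -> decomposes o c x ->
  ex o x ⊓ c = ex o (x ⊓ c).
Proof.
  intros E (p & q & pc & qc & ->). rewrite (meet_orth_join oml pc qc), ex_join.
  exact (meet_orth_join oml (ex_le_fixed E pc) (ex_le_fixed (ex_compl_fixed E) qc)).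
Qed.

Lemma interval_QMA b : ex o b = b -> QMA_on (interval o b) (interval_ops o b).
Proof.
  intros E. constructor; simpl.
  - exact (interval_OML oml b).
  - intros x xb. exact (ex_le_fixed E xb).
  - exact (Q1 _ _ qma).
  - intros p _. exact (Q2 _ _ qma p I).
  - intros p q _ _. apply ex_join.
  - intros p _. exact (Q4 _ _ qma p I).
  - intros p _. apply ex_meet_fixed; [exact E | apply (Q5 _ _ qma p I)].
Qed.

Lemma commutant_subalgebra a : ex o a = a -> subalgebra o (commutes o a).
Proof.
  intros E. unfold subalgebra. setoid_rewrite (commutes_decomposes oml).
  split; [exact (decomposes_join oml a) |].
  split; [exact (decomposes_meet oml a) |].
  split; [exact (decomposes_compl oml a) |].
  split; [exact (decomposes_0 oml a) |].
  split; [exact (decomposes_1 oml a) |].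
  intros x. exact (decomposes_ex E).
Qed.

Lemma commutant_split_iso a : ex o a = a ->
  iso_on (commutes o a) o (prod_set (interval o a) (interval o a^⊥))
    (prod_ops (interval_ops o a) (interval_ops o a^⊥)) (fun x => (x ⊓ a, x ⊓ a^⊥)).
Proof.
  intros E. pose proof (ex_compl_fixed E) as E'.
  unfold iso_on, prod_set, prod_ops, interval, interval_ops; simpl.
  split; [intros x _; split; apply (leIr oml) |].
  split.
  { intros x y ax ay [= xa xa'].
    rewrite (commutes_sym oml ax), (commutes_sym oml ay), xa, xa'. reflexivity. }
  split.
  { intros [u v] [ua va]; simpl in ua, va. exists (u ⊔ v). split.
    - apply (commutes_decomposes oml). exists u, v. auto.
    - rewrite (meet_orth_join oml ua va), (meet_orth_join_compl oml ua va). reflexivity. }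
  split.
  { intros x y ax ay. apply (commutes_decomposes oml) in ax, ay.
    rewrite !(meet_join_decomposes oml)
      by (try apply (decomposes_compl_swap oml); assumption).
    reflexivity. }
  split.
  { intros x y _ _. rewrite (meetIIr oml x y a), (meetIIr oml x y a^⊥). reflexivity. }
  split.
  { intros x ax. apply (commutes_decomposes oml) in ax.
    rewrite (meet_compl_decomposes oml ax),
      (meet_compl_decomposes oml (decomposes_compl_swap oml ax)).
    reflexivity. }
  split; [f_equal; apply (le0x oml) |].
  split; [f_equal; rewrite (meetC oml); apply (lex1 oml) |].
  intros x ax. apply (commutes_decomposes oml) in ax.
  rewrite (ex_meet_decomposes E ax),
    (ex_meet_decomposes E' (decomposes_compl_swap oml ax)).
  reflexivity.
Qed.

End QuantumMonadicAlgebra.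

Theorem mainTheorem5 (T : Type) (o : qops T) (a : T) :
  QMA o -> ex o a = a ->
  QMA_on (interval o a) (interval_ops o a) /\
  QMA_on (interval o (cp o a)) (interval_ops o (cp o a)) /\
  subalgebra o (fun x => commutes o a x) /\
  iso_on (fun x => commutes o a x) o
         (prod_set (interval o a) (interval o (cp o a)))
         (prod_ops (interval_ops o a) (interval_ops o (cp o a)))
         (fun x => (mt o x a, mt o x (cp o a))).
Proof.
  intros qma E.
  split; [exact (interval_QMA qma a E) |].
  split; [exact (interval_QMA qma (cp o a) (ex_compl_fixed qma E)) |].
  split; [exact (commutant_subalgebra qma a E) | exact (commutant_split_iso qma a E)].
Qed.
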